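(* Let $\Omega$ be the shift-orbit closure of a Sturmian word, with characteristic word $\tilde\omega$, and let $\omega,\omega'\in\Omega$ be distinct with $T^{n_0}(\omega)=T^{n_0}(\omega')=\tilde\omega$ for some $n_0\ge1$. Then for every factor $u$ of elements of $\Omega$ and every non-principal ultrafilter $p\in\beta\mathbb N$, $\omega|_u\in p$ if and only if $\omega'|_u\in p$. In particular $p^*(\omega)=p^*(\omega')$.
   Context: A Sturmian word is an infinite word over $\{0,1\}$ having exactly $k+1$ distinct factors of length $k$ for every $k\ge0$. $T$ is the shift, $\Omega$ the shift-orbit closure; $\tilde\omega$ is the unique element of $\Omega$ all of whose prefixes $v$ are left special ($0v$, $1v$ both factors). $\omega|_u=\{n\in\mathbb N:\omega_n\cdots\omega_{n+|u|-1}=u\}$. $\beta\mathbb N$ is the set of ultrafilters on $\mathbb N$; for $p\in\beta\mathbb N$, $p^*(\omega)$ is the unique infinite word such that a finite word $u$ is a prefix of $p^*(\omega)$ iff $\omega|_u\in p$. *)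

(* Alphabet {0,1} is encoded as bool: false = 0, true = 1. *)
From Stdlib Require Import Arith List Classical.
Import ListNotations.

Definition word := nat -> bool.

Definition shiftn (n : nat) (w : word) : word := fun i => w (n + i).

Definition occurs_at (w : word) (u : list bool) (n : nat) : Prop :=
  forall i, i < length u -> w (n + i) = nth i u false.

Definition prefix (u : list bool) (w : word) : Prop := occurs_at w u 0.

Definition factor (w : word) (u : list bool) : Prop := exists n, occurs_at w u n.

Definition sturmian (x : word) : Prop :=
  forall k, exists l : list (list bool),
    NoDup l /\ length l = S k /\
    forall u, In u l <-> (length u = k /\ factor x u).

(* Shift-orbit closure of x in {0,1}^N (product topology):
   w is in the closure iff every initial segment of w agrees with
   some T^n x on that segment. *)
Definition orbit_closure (x : word) (w : word) : Prop :=
  forall m, exists n, forall i, i < m -> w i = shiftn n x i.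

Definition factor_of_Omega (Omega : word -> Prop) (u : list bool) : Prop :=
  exists w, Omega w /\ factor w u.

Definition left_special (Omega : word -> Prop) (v : list bool) : Prop :=
  factor_of_Omega Omega (false :: v) /\ factor_of_Omega Omega (true :: v).

Definition characteristic (Omega : word -> Prop) (wt : word) : Prop :=
  Omega wt /\ forall v, prefix v wt -> left_special Omega v.

(* omega|_u = { n : omega_n ... omega_{n+|u|-1} = u } as a predicate on nat. *)
Definition occ (w : word) (u : list bool) : nat -> Prop := occurs_at w u.

Definition ultrafilter (p : (nat -> Prop) -> Prop) : Prop :=
  (~ p (fun _ => False)) /\
  (forall A B : nat -> Prop, p A -> (forall n, A n -> B n) -> p B) /\
  (forall A B : nat -> Prop, p A -> p B -> p (fun n => A n /\ B n)) /\
  (forall A : nat -> Prop, p A \/ p (fun n => ~ A n)).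

Definition nonprincipal (p : (nat -> Prop) -> Prop) : Prop :=
  forall k, ~ p (fun n => n = k).

Definition is_pstar (p : (nat -> Prop) -> Prop) (w z : word) : Prop :=
  forall u, prefix u z <-> p (occ w u).

From Stdlib Require Import Arith List Classical Lia.

(* Since T^{n0}(w) = T^{n0}(w') = wt, the words w and w' agree
   at every position >= n0, hence for every finite word u the occurrence sets
   w|_u and w'|_u agree above n0: they differ by a finite set.  A non-principal
   ultrafilter contains no finite set, so membership in it is insensitive to
   finite modifications; therefore w|_u is in p iff w'|_u is in p, for every u.  Since p*(w) is
   determined by the sets w|_u lying in p, p*(w) = p*(w'). *)

Section NonprincipalUltrafilter.

Variable p : (nat -> Prop) -> Prop.
Hypothesis p_ultra : ultrafilter p.
Hypothesis p_nonprincipal : nonprincipal p.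

Lemma ultrafilter_union (A B : nat -> Prop) :
  p (fun n => A n \/ B n) -> p A \/ p B.
Proof.
  destruct p_ultra as [p_no_empty [p_mono [p_inter p_compl]]]; intros pAB.
  destruct (p_compl A) as [pA | pnotA]; [now left |].
  destruct (p_compl B) as [pB | pnotB]; [now right |].
  exfalso; apply p_no_empty.
  apply (p_mono _ _ (p_inter _ _ (p_inter _ _ pnotA pnotB) pAB)).
  intros n [[notA notB] [a | b]]; tauto.
Qed.

(* A non-principal ultrafilter contains no initial segment {0, ..., k-1}:
   each one is the empty set plus finitely many singletons. *)
Lemma nonprincipal_no_initial_segment (k : nat) : ~ p (fun n => n < k).
Proof.
  destruct p_ultra as [p_no_empty [p_mono _]].
  induction k as [| k IH]; intro p_segment.
  - apply p_no_empty; apply (p_mono _ _ p_segment); intros; lia.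
  - assert (p_split : p (fun n => n < k \/ n = k)).
    { apply (p_mono _ _ p_segment); intros; lia. }
    destruct (ultrafilter_union _ _ p_split) as [p_lt | p_eq].
    + exact (IH p_lt).
    + exact (p_nonprincipal k p_eq).
Qed.

Lemma nonprincipal_eventual_mono (A B : nat -> Prop) (k : nat) :
  (forall n, k <= n -> A n -> B n) -> p A -> p B.
Proof.
  intros A_sub_B pA.
  pose proof (nonprincipal_no_initial_segment k) as no_segment.
  destruct p_ultra as [_ [p_mono [p_inter p_compl]]].
  destruct (p_compl (fun n => n < k)) as [p_segment | p_tail]; [contradiction |].
  apply (p_mono _ _ (p_inter _ _ pA p_tail)).
  intros n [a not_lt]; apply A_sub_B; [lia | exact a].
Qed.

Lemma nonprincipal_eventual_iff (A B : nat -> Prop) (k : nat) :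
  (forall n, k <= n -> (A n <-> B n)) -> (p A <-> p B).
Proof.
  intros A_iff_B; split; apply nonprincipal_eventual_mono with (k := k);
    intros n kn; apply A_iff_B in kn; tauto.
Qed.

End NonprincipalUltrafilter.

Lemma same_shift_agree (w w' v : word) (n0 : nat) :
  (forall i, shiftn n0 w i = v i) -> (forall i, shiftn n0 w' i = v i) ->
  forall j, n0 <= j -> w j = w' j.
Proof.
  intros w_shift w'_shift j n0j.
  replace j with (n0 + (j - n0)) by lia.
  specialize (w_shift (j - n0)); specialize (w'_shift (j - n0)).
  unfold shiftn in *; congruence.
Qed.

Lemma agree_occ_iff (w w' : word) (k : nat) (u : list bool) :
  (forall j, k <= j -> w j = w' j) ->
  forall n, k <= n -> (occ w u n <-> occ w' u n).
Proof.
  intros agree n kn; unfold occ, occurs_at.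
  split; intros occ_u i i_lt; [rewrite <- agree | rewrite agree]; auto; lia.
Qed.

Lemma is_pstar_congr (p : (nat -> Prop) -> Prop) (w w' : word) :
  (forall u, p (occ w u) <-> p (occ w' u)) ->
  forall z, is_pstar p w z <-> is_pstar p w' z.
Proof.
  intros same_occ z; unfold is_pstar.
  split; intros pstar u; rewrite pstar; [| symmetry]; apply same_occ.
Qed.

Theorem mainTheorem15 (x : word) (wt w w' : word) (n0 : nat) :
  sturmian x ->
  characteristic (orbit_closure x) wt ->
  orbit_closure x w -> orbit_closure x w' ->
  w <> w' ->
  1 <= n0 ->
  (forall i, shiftn n0 w i = wt i) ->
  (forall i, shiftn n0 w' i = wt i) ->
  forall p : (nat -> Prop) -> Prop,
    ultrafilter p -> nonprincipal p ->
    (forall u, factor_of_Omega (orbit_closure x) u ->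
       (p (occ w u) <-> p (occ w' u))) /\
    (forall z, is_pstar p w z <-> is_pstar p w' z).
Proof.
  intros _ _ _ _ _ _ w_shift w'_shift p p_ultra p_nonprincipal.
  pose proof (same_shift_agree w w' wt n0 w_shift w'_shift) as agree.
  assert (same_occ : forall u, p (occ w u) <-> p (occ w' u)).
  { intro u; apply (nonprincipal_eventual_iff p p_ultra p_nonprincipal _ _ n0).
    exact (agree_occ_iff w w' n0 u agree). }
  split.
  - intros u _; apply same_occ.
  - apply is_pstar_congr, same_occ.
Qed.
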